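(* Let ${\cal X}$, ${\cal V}$, ${\cal Y}$ be finite alphabets, $P_X$ a distribution on ${\cal X}$, $P_{V|X}$ a channel from ${\cal X}$ to ${\cal V}$, and $d$ a nonnegative convex function on probability distributions on ${\cal X}\times{\cal Y}$ (i.e., ${\rm E}_J[d(P_{X_JY_J})]\ge d({\rm E}_J[P_{X_JY_J}])$ for every finite random variable $J$). Let $X^L$ be i.i.d. with distribution $P_X$, let $V^L$ be obtained from $X^L$ through the memoryless channel $P_{V|X}$, and let $Y^L$ be the output of a code of block length $L$ with $2^{LR}$ code words in ${\cal Y}^L$ whose (possibly random) encoder sees only $V^L$, so that $Y^L$ is conditionally independent of $X^L$ given $V^L$. If ${\rm E}[d(P^e_{X^LY^L})]=\Delta$, then $$R\ \ge\ \min_{P_{Y|V}:\ d(P_{XY})\le\Delta} I(V;Y),$$ where for a channel $P_{Y|V}$ the joint law is $P_{XVY}=P_XP_{V|X}P_{Y|V}$, $P_{XY}$ is its $(X,Y)$-marginal, and $I(V;Y)$ is computed from its $(V,Y)$-marginal.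
   Context: For strings $x^L\in{\cal X}^L$, $y^L\in{\cal Y}^L$, the empirical distribution is $P^e_{x^Ly^L}(a,b)=\frac1L|\{\ell:(x_\ell,y_\ell)=(a,b)\}|$ for $a\in{\cal X}$, $b\in{\cal Y}$. Mutual information is $I(V;Y)=\sum_{(v,y)\in\mathrm{supp}P_{VY}}P_{VY}(v,y)\log_2\frac{P_{VY}(v,y)}{P_V(v)P_Y(y)}$. *)

From HB Require Import structures.
From mathcomp Require Import all_boot all_order all_algebra.
From mathcomp Require Import all_classical all_reals all_analysis.
Set Implicit Arguments. Unset Strict Implicit. Unset Printing Implicit Defensive.
Import Order.TTheory GRing.Theory Num.Theory.
Local Open Scope ring_scope.

Section Defs.
Variable R : realType.

Definition log2 (x : R) : R := ln x / ln 2.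

Definition is_dist (T : finType) (p : {ffun T -> R}) : Prop :=
  (forall t, 0 <= p t) /\ \sum_(t : T) p t = 1.

Definition is_channel (A B : finType) (W : {ffun A -> {ffun B -> R}}) : Prop :=
  forall a, is_dist (W a).

Definition marg1 (A B : finType) (P : {ffun A * B -> R}) : {ffun A -> R} :=
  [ffun a => \sum_(b : B) P (a, b)].
Definition marg2 (A B : finType) (P : {ffun A * B -> R}) : {ffun B -> R} :=
  [ffun b => \sum_(a : A) P (a, b)].
Definition mutinfo (A B : finType) (P : {ffun A * B -> R}) : R :=
  \sum_(ab : A * B | P ab != 0)
     P ab * log2 (P ab / (marg1 P ab.1 * marg2 P ab.2)).

(* d is nonnegative and convex on the probability distributions on T:
   E_J[d(Q_J)] >= d(E_J[Q_J]) for every finite random variable J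
   (J uniform over 'I_n with law w). *)
Definition mixture (T : finType) (n : nat) (w : {ffun 'I_n -> R})
  (Q : 'I_n -> {ffun T -> R}) : {ffun T -> R} :=
  [ffun t => \sum_(j < n) w j * Q j t].
Definition nonneg_convex_dist (T : finType) (d : {ffun T -> R} -> R) : Prop :=
  (forall p, is_dist p -> 0 <= d p) /\
  (forall (n : nat) (w : {ffun 'I_n -> R}) (Q : 'I_n -> {ffun T -> R}),
     is_dist w -> (forall j, is_dist (Q j)) ->
     d (mixture w Q) <= \sum_(j < n) w j * d (Q j)).

Definition empirical (X Y : finType) (L : nat) (x : L.-tuple X) (y : L.-tuple Y)
  : {ffun X * Y -> R} :=
  [ffun ab => #|[set l : 'I_L | (tnth x l, tnth y l) == ab]|%:R / L%:R].

Definition joint_XY (X V Y : finType) (PX : {ffun X -> R})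
  (PVX : {ffun X -> {ffun V -> R}}) (W : {ffun V -> {ffun Y -> R}})
  : {ffun X * Y -> R} :=
  [ffun ab => \sum_(v : V) PX ab.1 * PVX ab.1 v * W v ab.2].
Definition joint_VY (X V Y : finType) (PX : {ffun X -> R})
  (PVX : {ffun X -> {ffun V -> R}}) (W : {ffun V -> {ffun Y -> R}})
  : {ffun V * Y -> R} :=
  [ffun vb => \sum_(x : X) PX x * PVX x vb.1 * W vb.1 vb.2].

Definition block_law (X V Y : finType) (L : nat) (PX : {ffun X -> R})
  (PVX : {ffun X -> {ffun V -> R}})
  (enc : {ffun L.-tuple V -> {ffun L.-tuple Y -> R}})
  (x : L.-tuple X) (v : L.-tuple V) (y : L.-tuple Y) : R :=
  (\prod_(l < L) (PX (tnth x l) * PVX (tnth x l) (tnth v l))) * enc v y.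

Definition expected_distortion (X V Y : finType) (L : nat) (PX : {ffun X -> R})
  (PVX : {ffun X -> {ffun V -> R}})
  (enc : {ffun L.-tuple V -> {ffun L.-tuple Y -> R}})
  (d : {ffun X * Y -> R} -> R) : R :=
  \sum_(x : L.-tuple X) \sum_(v : L.-tuple V) \sum_(y : L.-tuple Y)
     block_law PX PVX enc x v y * d (empirical x y).

End Defs.

(* The test channel is the time average W(b|v) = (1/L) sum_l P(Y_l = b | V_l = v)
   of the per-letter channels of the code.  Its (X,Y)-law is the expected empirical
   distribution of (X^L, Y^L), so convexity of d bounds its distortion by Delta.
   Writing s(v|b) for the posterior of V given Y under W, time sharing gives
   L ln 2 I(V;Y) = E[ln prod_l s(V_l|Y_l) - ln P(V^L)].  For each y^L the product
   prod_l s(.|y_l) is a sub-probability on V^L and Y^L takes at most |C| <= 2^(LR)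
   values, so Gibbs' inequality bounds this expectation by ln |C| <= L R ln 2. *)

From HB Require Import structures.
From mathcomp Require Import all_boot all_order all_algebra.
From mathcomp Require Import all_classical all_reals all_analysis.
From mathcomp Require Import ring lra.
Set Implicit Arguments. Unset Strict Implicit. Unset Printing Implicit Defensive.
Import Order.TTheory GRing.Theory Num.Theory.
Local Open Scope ring_scope.

Lemma sum_tuple_prod (R : comNzRingType) (T : finType) (L : nat)
    (F : 'I_L -> T -> R) :
  \sum_(t : L.-tuple T) \prod_(k < L) F k (tnth t k) =
  \prod_(k < L) \sum_(a : T) F k a.
Proof.
rewrite bigA_distr_bigA /=.
rewrite (reindex (fun f : {ffun 'I_L -> T} => [tuple f k | k < L])) /=.
  by apply: eq_bigr => f _; apply: eq_bigr => k _; rewrite tnth_mktuple.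
exists (fun t : L.-tuple T => [ffun k => tnth t k]) => [f _|t _].
  by apply/ffunP => k; rewrite ffunE tnth_mktuple.
by apply: eq_from_tnth => k; rewrite tnth_mktuple ffunE.
Qed.

Lemma sum_tuple_prod_at (R : comNzRingType) (T : finType) (L : nat)
    (F : 'I_L -> T -> R) (l : 'I_L) (c : T) :
  \sum_(t : L.-tuple T | tnth t l == c) \prod_(k < L) F k (tnth t k) =
  F l c * \prod_(k < L | k != l) \sum_(a : T) F k a.
Proof.
pose G k a := if k == l then (a == c)%:R * F k a else F k a.
have G_l : \sum_a G l a = F l c.
  rewrite (bigD1 c) //= /G !eqxx mul1r big1 ?addr0 // => a /negbTE->.
  by rewrite mul0r.
have G_off k : k != l -> G k =1 F k by rewrite /G => /negbTE->.
have := sum_tuple_prod G; rewrite (bigD1 l) //= G_l.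
rewrite (eq_bigr _ (fun k kl => eq_bigr _ (fun a _ => G_off k kl a))) => <-.
rewrite big_mkcond; apply: eq_bigr => t _ /=.
rewrite (bigD1 l) //= [in RHS](bigD1 l) //=.
rewrite [X in _ = _ * X](eq_bigr (fun k => F k (tnth t k))) => [|k kl]; last exact: G_off.
rewrite /G eqxx.
by case: eqP => [->|]; rewrite ?mul1r ?mul0r.
Qed.

Lemma sum_triple (R : nmodType) (A B C : finType) (F : A -> B -> C -> R) :
  \sum_a \sum_b \sum_c F a b c = \sum_(z : A * (B * C)) F z.1 z.2.1 z.2.2.
Proof.
transitivity (\sum_a \sum_(bc : B * C) F a bc.1 bc.2).
  by apply: eq_bigr => a _; rewrite pair_bigA.
exact: (pair_bigA _ (fun a bc => F a bc.1 bc.2)).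
Qed.

Lemma sum_fibers (R : nmodType) (I J : finType) (f : I -> J) (F : I -> R) :
  \sum_j \sum_(i | f i == j) F i = \sum_i F i.
Proof. by rewrite [RHS](partition_big f xpredT). Qed.

Lemma ln_prod (R : realType) (I : finType) (P : pred I) (F : I -> R) :
  (forall i, P i -> 0 < F i) ->
  ln (\prod_(i | P i) F i) = \sum_(i | P i) ln (F i).
Proof.
move=> F_gt0.
have [] : \sum_(i | P i) ln (F i) = ln (\prod_(i | P i) F i) /\ 0 < \prod_(i | P i) F i.
  apply: (big_rec2 (fun s p => s = ln p /\ 0 < p)) => [|i s p Pi [-> p_gt0]].
    by rewrite ln1.
  by split; [rewrite lnM ?posrE ?F_gt0 | rewrite mulr_gt0 ?F_gt0].
by [].
Qed.

Lemma ln_le_subr1 (R : realType) (x : R) : 0 < x -> ln x <= x - 1.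
Proof. by move=> x_gt0; rewrite -[in ln x](subrKC 1 x) le_ln1Dx //; lra. Qed.

Lemma sum_support (R : nmodType) (I : finType) (f : I -> R) :
  \sum_(i | f i != 0) f i = \sum_i f i.
Proof.
rewrite [RHS](bigID (fun i => f i != 0)) /= [X in _ + X]big1 ?addr0 //.
by move=> i /negPn/eqP.
Qed.

Lemma exists_neq0_of_sum1 (R : nzSemiRingType) (I : finType) (f : I -> R) :
  \sum_i f i = 1 -> exists i, f i != 0.
Proof.
move=> f_sum1; apply/existsP; apply: contraT => /existsPn f0.
by move: f_sum1; rewrite big1 => [/eqP|i _]; [rewrite eq_sym oner_eq0 | exact/eqP/negPn].
Qed.

Lemma gibbs_ineq (R : realType) (I : finType) (Q T : I -> R) :
  (forall i, 0 <= Q i) -> \sum_i Q i = 1 ->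
  (forall i, Q i != 0 -> 0 < T i) -> \sum_(i | Q i != 0) T i <= 1 ->
  \sum_(i | Q i != 0) Q i * ln (T i) <= \sum_(i | Q i != 0) Q i * ln (Q i).
Proof.
move=> Q_ge0 Q_sum1 T_gt0 T_sum_le1; rewrite -subr_le0 -sumrB.
apply: (@le_trans _ _ (\sum_(i | Q i != 0) (T i - Q i))); last first.
  by rewrite sumrB sum_support Q_sum1 subr_le0.
apply: ler_sum => i Qi; have Q_gt0 : 0 < Q i by rewrite lt_def Qi Q_ge0.
rewrite -mulrBr -ln_div ?posrE ?T_gt0 //.
have -> : T i - Q i = Q i * (T i / Q i - 1) by field; rewrite gt_eqF.
by rewrite ler_pM2l // ln_le_subr1 // divr_gt0 ?T_gt0.
Qed.

Lemma convex_dist_mixture (R : realType) (T I : finType) (d : {ffun T -> R} -> R)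
    (w : I -> R) (Q : I -> {ffun T -> R}) :
  nonneg_convex_dist d -> (forall i, 0 <= w i) -> \sum_i w i = 1 ->
  (forall i, is_dist (Q i)) ->
  d [ffun t => \sum_i w i * Q i t] <= \sum_i w i * d (Q i).
Proof.
move=> [_ d_convex] w_ge0 w_sum1 Q_dist.
have sum_enum (F : I -> R) : \sum_i F i = \sum_(j < #|I|) F (enum_val j).
  by rewrite -(big_enum_val (A := predT)).
pose w' := [ffun j : 'I_#|I| => w (enum_val j)].
have w'_dist : is_dist w'.
  by split=> [j|]; rewrite ?ffunE // -w_sum1 sum_enum; apply: eq_bigr => j _; rewrite ffunE.
have := d_convex _ w' (fun j => Q (enum_val j)) w'_dist (fun j => Q_dist _).
congr (d _ <= _); last by rewrite sum_enum; apply: eq_bigr => j _; rewrite ffunE.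
by apply/ffunP => t; rewrite !ffunE sum_enum; apply: eq_bigr => j _; rewrite ffunE.
Qed.

Lemma empiricalE (R : realType) (X Y : finType) (L : nat)
    (x : L.-tuple X) (y : L.-tuple Y) (ab : X * Y) :
  empirical R x y ab = L%:R^-1 * \sum_(l < L) ((tnth x l, tnth y l) == ab)%:R.
Proof.
rewrite ffunE mulrC -sum1_card natr_sum big_mkcond /=; congr (_ * _).
by apply: eq_bigr => l _; rewrite inE; case: eqP.
Qed.

Lemma empirical_is_dist (R : realType) (X Y : finType) (L : nat)
    (x : L.-tuple X) (y : L.-tuple Y) :
  (0 < L)%N -> is_dist (empirical R x y).
Proof.
move=> L_gt0; split=> [ab|]; first by rewrite ffunE divr_ge0 ?ler0n.
under eq_bigr do rewrite empiricalE.
rewrite -mulr_sumr exchange_big /= (eq_bigr (fun _ => 1)) => [|l _].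
  by rewrite sumr_const card_ord mulVf // pnatr_eq0 -lt0n.
rewrite (bigD1 (tnth x l, tnth y l)) //= eqxx big1 ?addr0 // => ab.
by rewrite eq_sym => /negbTE->.
Qed.

(* [inf] is [0] on sets with no lower bound, hence the hypothesis [0 <= r]. *)
Lemma inf_le_of_mem (R : realType) (S : set R) (x r : R) :
  S x -> x <= r -> 0 <= r -> inf S <= r.
Proof.
move=> Sx x_le_r r_ge0; have [S_lb|S_nlb] := pselect (has_lbound S).
  exact: le_trans (ge_inf S_lb Sx) x_le_r.
by rewrite inf_out // => -[].
Qed.

Lemma code_card_gt0 (R : realType) (A B : finType) (p : A -> R)
    (e : {ffun A -> {ffun B -> R}}) (C : {set B}) :
  \sum_a p a = 1 -> is_channel e -> (forall a b, e a b != 0 -> b \in C) ->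
  (0 < #|C|)%N.
Proof.
move=> p_sum1 e_channel e_supp; have [a _] := exists_neq0_of_sum1 p_sum1.
have [b eab] := exists_neq0_of_sum1 (e_channel a).2.
by apply/card_gt0P; exists b; exact: e_supp eab.
Qed.

Lemma ler_sum_term (R : numDomainType) (I : finType) (P : pred I) (F : I -> R) (i : I) :
  P i -> (forall j, P j -> 0 <= F j) -> F i <= \sum_(j | P j) F j.
Proof.
move=> Pi F_ge0; rewrite (bigD1 i) //= lerDl sumr_ge0 // => j /andP[Pj _].
exact: F_ge0.
Qed.

Lemma is_dist_le1 (R : realType) (T : finType) (p : {ffun T -> R}) (t : T) :
  is_dist p -> p t <= 1.
Proof. by case=> p_ge0 <-; apply: ler_sum_term. Qed.

Lemma sum_kernel_over_set_le_card (R : realType) (A B : finType)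
    (Q : A * B -> R) (S : A -> B -> R) (C : {set B}) :
  (forall z, Q z != 0 -> z.2 \in C) ->
  (forall a b, 0 <= S a b) -> (forall b, \sum_a S a b <= 1) ->
  \sum_(z | Q z != 0) S z.1 z.2 <= #|C|%:R.
Proof.
move=> Q_supp S_ge0 S_sum_le1.
apply: (@le_trans _ _ (\sum_(z | z.2 \in C) S z.1 z.2)).
  rewrite [X in _ <= X]big_mkcond [X in X <= _]big_mkcond; apply: ler_sum => z _.
  case: ifP => [/Q_supp->//|_].
  by case: ifP => // _; apply: S_ge0.
rewrite -(pair_big_dep xpredT (fun _ b => b \in C) S) exchange_big /=.
apply: (@le_trans _ _ (\sum_(b in C) 1)); first by apply: ler_sum => b _; apply: S_sum_le1.
by rewrite sumr_const.
Qed.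

Lemma info_density_le_ln_card (R : realType) (A B : finType) (p : A -> R)
    (e : {ffun A -> {ffun B -> R}}) (S : A -> B -> R) (C : {set B}) :
  (forall a, 0 <= p a) -> \sum_a p a = 1 -> is_channel e ->
  (forall a b, e a b != 0 -> b \in C) ->
  (forall a b, 0 <= S a b) -> (forall b, \sum_a S a b <= 1) ->
  (forall a b, p a * e a b != 0 -> 0 < S a b) ->
  \sum_a \sum_b p a * e a b * (ln (S a b) - ln (p a)) <= ln #|C|%:R.
Proof.
move=> p_ge0 p_sum1 e_channel e_supp S_ge0 S_sum_le1 S_gt0.
have c_gt0 : 0 < #|C|%:R :> R by rewrite ltr0n (code_card_gt0 p_sum1 e_channel e_supp).
set c := #|C|%:R : R.
pose Q (z : A * B) := p z.1 * e z.1 z.2.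
pose T (z : A * B) := S z.1 z.2 / c.
have e_ge0 a b : 0 <= e a b by case: (e_channel a).
have Q_ge0 z : 0 <= Q z by rewrite mulr_ge0.
have Q_sum1 : \sum_z Q z = 1.
  rewrite -p_sum1 -(pair_bigA _ (fun a b => p a * e a b)); apply: eq_bigr => a _ /=.
  by rewrite -mulr_sumr (e_channel a).2 mulr1.
have Q_gt0 z : Q z != 0 -> 0 < p z.1 /\ 0 < e z.1 z.2.
  by rewrite mulf_eq0 negb_or => /andP[pz ez]; rewrite !lt_def pz ez p_ge0 e_ge0.
(* Gibbs against [T], a sub-probability on the support of [Q] because the
   code words all lie in [C]. *)
have T_sum_le1 : \sum_(z | Q z != 0) T z <= 1.
  rewrite -mulr_suml ler_pdivrMr // mul1r.
  apply: sum_kernel_over_set_le_card => // z Qz.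
  by rewrite (e_supp z.1) ?gt_eqF //; case: (Q_gt0 z Qz).
have gibbs := gibbs_ineq Q_ge0 Q_sum1 (fun z Qz => divr_gt0 (S_gt0 _ _ Qz) c_gt0) T_sum_le1.
have ln_e_le0 : \sum_(z | Q z != 0) Q z * ln (e z.1 z.2) <= 0.
  by apply: sumr_le0 => z Qz; rewrite pmulr_rle0 ?ln_le0 ?is_dist_le1 // lt_def Qz Q_ge0.
have density z : Q z != 0 -> Q z * (ln (S z.1 z.2) - ln (p z.1)) =
    Q z * ln (T z) - Q z * ln (Q z) + Q z * ln (e z.1 z.2) + Q z * ln c.
  move=> Qz; have [pz ez] := Q_gt0 z Qz; have Sz := S_gt0 _ _ Qz.
  by rewrite /T /Q ln_div ?lnM ?posrE //; ring.
rewrite pair_bigA /= (bigID (fun z => Q z != 0)) /= [X in _ + X]big1 => [|z /negPn/eqP].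
  rewrite addr0 (eq_bigr _ density) !big_split /= sumrN -mulr_suml.
  by rewrite sum_support Q_sum1 mul1r; lra.
by rewrite /Q => ->; rewrite mul0r.
Qed.

Section BlockCode.
Variables (R : realType) (X V Y : finType) (PX : {ffun X -> R})
  (PVX : {ffun X -> {ffun V -> R}}) (L : nat)
  (enc : {ffun L.-tuple V -> {ffun L.-tuple Y -> R}}).
Hypotheses (PX_dist : is_dist PX) (PVX_channel : is_channel PVX)
  (L_gt0 : (0 < L)%N) (enc_channel : is_channel enc).

Definition PV (v : V) : R := \sum_x PX x * PVX x v.

Definition PV_block (vs : L.-tuple V) : R := \prod_(k < L) PV (tnth vs k).

Definition PVY_block (vs : L.-tuple V) (ys : L.-tuple Y) : R :=
  PV_block vs * enc vs ys.

Definition PVY_at (l : 'I_L) (v : V) (b : Y) : R :=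
  \sum_(vs | tnth vs l == v) \sum_(ys | tnth ys l == b) PVY_block vs ys.

(* P(Y_l = b | V_l = v), written without dividing by PV v so that it is a
   channel also off the support of PV. *)
Definition chan_at (l : 'I_L) (v : V) (b : Y) : R :=
  \sum_(vs | tnth vs l == v)
    (\prod_(k < L | k != l) PV (tnth vs k)) * \sum_(ys | tnth ys l == b) enc vs ys.

Definition avg_chan : {ffun V -> {ffun Y -> R}} :=
  [ffun v => [ffun b => L%:R^-1 * \sum_(l < L) chan_at l v b]].

Definition avg_VY : {ffun V * Y -> R} := joint_VY PX PVX avg_chan.

Definition posterior (v : V) (b : Y) : R := avg_VY (v, b) / marg2 avg_VY b.

Lemma PV_ge0 v : 0 <= PV v.
Proof.
by apply: sumr_ge0 => x _; rewrite mulr_ge0 //; [case: PX_dist | case: (PVX_channel x)].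
Qed.

Lemma PV_sum1 : \sum_v PV v = 1.
Proof.
rewrite exchange_big /=; case: PX_dist => _ <-; apply: eq_bigr => x _.
by rewrite -mulr_sumr (PVX_channel x).2 mulr1.
Qed.

Lemma PV_block_ge0 vs : 0 <= PV_block vs.
Proof. by apply: prodr_ge0 => k _; apply: PV_ge0. Qed.

Lemma PV_block_sum1 : \sum_vs PV_block vs = 1.
Proof.
by rewrite /PV_block (sum_tuple_prod (fun=> PV)) big1 // => k _; apply: PV_sum1.
Qed.

Lemma enc_ge0 vs ys : 0 <= enc vs ys.
Proof. by case: (enc_channel vs). Qed.

Lemma PVY_block_ge0 vs ys : 0 <= PVY_block vs ys.
Proof. by rewrite mulr_ge0 ?PV_block_ge0 ?enc_ge0. Qed.

Lemma chan_at_ge0 l v b : 0 <= chan_at l v b.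
Proof.
apply: sumr_ge0 => vs _; rewrite mulr_ge0 ?sumr_ge0 // => [|ys _]; last exact: enc_ge0.
by apply: prodr_ge0 => k _; apply: PV_ge0.
Qed.

Lemma chan_at_sum1 l v : \sum_b chan_at l v b = 1.
Proof.
pose F k a := if k == l then 1 else PV a.
have F_off k : k != l -> F k =1 PV by rewrite /F => /negbTE->.
rewrite exchange_big /=.
transitivity (\sum_(vs | tnth vs l == v) \prod_(k < L) F k (tnth vs k)).
  apply: eq_bigr => vs _; rewrite -mulr_sumr sum_fibers (enc_channel vs).2 mulr1.
  by rewrite [RHS](bigD1 l) //= {1}/F eqxx mul1r; apply: eq_bigr => k /F_off.
rewrite sum_tuple_prod_at /F eqxx mul1r big1 // => k kl.
by rewrite (eq_bigr _ (fun a _ => F_off k kl a)) PV_sum1.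
Qed.

Lemma avg_chan_is_channel : is_channel avg_chan.
Proof.
move=> v; split=> [b|]; rewrite ?ffunE.
  by rewrite mulr_ge0 ?invr_ge0 ?ler0n ?sumr_ge0 // => l _; apply: chan_at_ge0.
under eq_bigr do rewrite ffunE.
rewrite -mulr_sumr exchange_big /= (eq_bigr (fun=> 1)) => [|l _]; last exact: chan_at_sum1.
by rewrite sumr_const card_ord mulVf // pnatr_eq0 -lt0n.
Qed.

Lemma avg_VYE v b : avg_VY (v, b) = PV v * avg_chan v b.
Proof. by rewrite /avg_VY ffunE mulr_suml; apply: eq_bigr => x _. Qed.

Lemma marg1_avg_VY v : marg1 avg_VY v = PV v.
Proof.
rewrite ffunE (eq_bigr _ (fun b _ => avg_VYE v b)) -mulr_sumr.
by rewrite (avg_chan_is_channel v).2 mulr1.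
Qed.

Lemma PVY_atE l v b : PVY_at l v b = PV v * chan_at l v b.
Proof.
rewrite /PVY_at /chan_at mulr_sumr; apply: eq_bigr => vs /eqP vl; rewrite mulrA mulr_sumr.
by apply: eq_bigr => ys _; rewrite /PVY_block /PV_block (bigD1 l) //= vl.
Qed.

Lemma avg_VY_mean v b : avg_VY (v, b) = L%:R^-1 * \sum_(l < L) PVY_at l v b.
Proof.
rewrite avg_VYE !ffunE mulrCA mulr_sumr; congr (_ * _).
by apply: eq_bigr => l _; rewrite PVY_atE.
Qed.

Lemma sum_PVY_at l (G : V -> Y -> R) :
  \sum_v \sum_b PVY_at l v b * G v b =
  \sum_vs \sum_ys PVY_block vs ys * G (tnth vs l) (tnth ys l).
Proof.
rewrite -(sum_fibers (fun vs => tnth vs l)); apply: eq_bigr => v _.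
under eq_bigr do rewrite mulr_suml.
rewrite exchange_big /=; apply: eq_bigr => vs /eqP vl.
rewrite -(sum_fibers (fun ys => tnth ys l)); apply: eq_bigr => b _.
by rewrite mulr_suml; apply: eq_bigr => ys /eqP yl; rewrite vl yl.
Qed.

Lemma avg_VY_ge0 v b : 0 <= avg_VY (v, b).
Proof.
rewrite avg_VYE mulr_ge0 ?PV_ge0 //.
by case: (avg_chan_is_channel v).
Qed.

Lemma marg2_avg_VY_ge v b : avg_VY (v, b) <= marg2 avg_VY b.
Proof.
rewrite [X in _ <= X]ffunE.
by apply: (ler_sum_term (F := fun v' => avg_VY (v', b))) => // v' _; apply: avg_VY_ge0.
Qed.

Lemma posterior_ge0 v b : 0 <= posterior v b.
Proof. by rewrite divr_ge0 ?avg_VY_ge0 // (le_trans (avg_VY_ge0 v b)) ?marg2_avg_VY_ge. Qed.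

Lemma posterior_sum_le1 b : \sum_v posterior v b <= 1.
Proof.
rewrite /posterior -mulr_suml (_ : \sum_v _ = marg2 avg_VY b); last by rewrite [RHS]ffunE.
by have [->|m_neq0] := eqVneq (marg2 avg_VY b) 0; rewrite ?invr0 ?mulr0 ?divff.
Qed.

Lemma PV_gt0_of_PVY k vs ys : PVY_block vs ys != 0 -> 0 < PV (tnth vs k).
Proof.
by rewrite mulf_eq0 negb_or => /andP[/prodf_neq0 PV_neq0 _]; rewrite lt_def PV_neq0 ?PV_ge0.
Qed.

Lemma posterior_gt0 l vs ys :
  PVY_block vs ys != 0 -> 0 < posterior (tnth vs l) (tnth ys l).
Proof.
move=> PVY_neq0.
have PVY_gt0 : 0 < PVY_block vs ys by rewrite lt_def PVY_neq0 PVY_block_ge0.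
have PVY_le_at : PVY_block vs ys <= PVY_at l (tnth vs l) (tnth ys l).
  pose F vs' := \sum_(ys' | tnth ys' l == tnth ys l) PVY_block vs' ys'.
  apply: le_trans (ler_sum_term (F := F) _ _) => //; last first.
    by move=> vs' _; apply: sumr_ge0 => ys' _; apply: PVY_block_ge0.
  by apply: (ler_sum_term (F := PVY_block vs)) => // ys' _; apply: PVY_block_ge0.
have avg_gt0 : 0 < avg_VY (tnth vs l, tnth ys l).
  rewrite avg_VY_mean mulr_gt0 ?invr_gt0 ?ltr0n //.
  apply: (lt_le_trans (lt_le_trans PVY_gt0 PVY_le_at)).
  apply: (ler_sum_term (F := fun l' => PVY_at l' _ _)) => // l' _.
  by rewrite PVY_atE mulr_ge0 ?PV_ge0 ?chan_at_ge0.
by rewrite divr_gt0 // (lt_le_trans avg_gt0) ?marg2_avg_VY_ge.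
Qed.

Lemma mutinfo_avg_VY :
  L%:R * ln 2 * mutinfo avg_VY = \sum_vs \sum_ys PVY_block vs ys *
    \sum_(l < L) ln (posterior (tnth vs l) (tnth ys l) / PV (tnth vs l)).
Proof.
have ln2_neq0 : ln 2 != 0 :> R by rewrite gt_eqF // ln_gt0 // ltr1n.
have mutinfoE : mutinfo avg_VY =
    (ln 2)^-1 * \sum_v \sum_b avg_VY (v, b) * ln (posterior v b / PV v).
  rewrite /mutinfo big_mkcond pair_bigA mulr_sumr; apply: eq_bigr => -[v b] _ /=.
  have [->|_] := eqVneq (avg_VY (v, b)) 0; first by rewrite !mul0r mulr0.
  rewrite /= /log2 marg1_avg_VY /posterior [PV v * _]mulrC invfM [X in ln X]mulrA; ring.
transitivity (\sum_(l < L) \sum_v \sum_b PVY_at l v b * ln (posterior v b / PV v)).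
  rewrite mutinfoE -mulrA mulVKf // [RHS]exchange_big mulr_sumr; apply: eq_bigr => v _.
  rewrite [RHS]exchange_big mulr_sumr; apply: eq_bigr => b _.
  by rewrite avg_VY_mean !mulrA mulfV ?mul1r ?mulr_suml // pnatr_eq0 -lt0n.
under eq_bigr do rewrite sum_PVY_at.
rewrite exchange_big; apply: eq_bigr => vs _; rewrite exchange_big; apply: eq_bigr => ys _.
by rewrite mulr_sumr.
Qed.

Lemma mutinfo_avg_VY_le (C : {set L.-tuple Y}) :
  (forall vs ys, enc vs ys != 0 -> ys \in C) ->
  L%:R * ln 2 * mutinfo avg_VY <= ln #|C|%:R.
Proof.
move=> enc_supp; rewrite mutinfo_avg_VY.
pose S vs ys := \prod_(l < L) posterior (tnth vs l) (tnth ys l).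
have S_gt0 vs ys : PVY_block vs ys != 0 -> 0 < S vs ys.
  by move=> PVY_neq0; apply: prodr_gt0 => l _; apply: posterior_gt0.
have density vs ys : PVY_block vs ys *
    \sum_(l < L) ln (posterior (tnth vs l) (tnth ys l) / PV (tnth vs l)) =
    PV_block vs * enc vs ys * (ln (S vs ys) - ln (PV_block vs)).
  have [PVY0|PVY_neq0] := eqVneq (PVY_block vs ys) 0.
    by rewrite PVY0 -[PV_block _ * _]/(PVY_block vs ys) PVY0 !mul0r.
  rewrite /S /PV_block !ln_prod => [|l _|l _]; last 2 first.
  - exact: PV_gt0_of_PVY PVY_neq0.
  - exact: posterior_gt0.
  rewrite -sumrB; congr (_ * _); apply: eq_bigr => l _.
  by rewrite ln_div ?posrE ?posterior_gt0 ?(PV_gt0_of_PVY _ PVY_neq0).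
under eq_bigr do under eq_bigr do rewrite density.
apply: info_density_le_ln_card PV_block_ge0 PV_block_sum1 enc_channel enc_supp _ _ S_gt0.
- by move=> vs ys; apply: prodr_ge0 => l _; apply: posterior_ge0.
- move=> ys; rewrite (sum_tuple_prod (fun l v => posterior v (tnth ys l))).
  apply: prodr_ile1 => l _; rewrite posterior_sum_le1 andbT.
  by apply: sumr_ge0 => v _; apply: posterior_ge0.
Qed.

Lemma block_law_ge0 xs vs ys : 0 <= block_law PX PVX enc xs vs ys.
Proof.
rewrite mulr_ge0 ?enc_ge0 // prodr_ge0 // => k _.
by rewrite mulr_ge0 //; [case: PX_dist | case: (PVX_channel (tnth xs k))].
Qed.

Lemma block_law_sum1 : \sum_xs \sum_vs \sum_ys block_law PX PVX enc xs vs ys = 1.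
Proof.
rewrite exchange_big /= -PV_block_sum1; apply: eq_bigr => vs _.
under eq_bigr do rewrite -mulr_sumr (enc_channel vs).2 mulr1.
by rewrite (sum_tuple_prod (fun k x => PX x * PVX x (tnth vs k))).
Qed.

Lemma block_law_at l a b :
  \sum_xs \sum_vs \sum_ys
    block_law PX PVX enc xs vs ys * ((tnth xs l, tnth ys l) == (a, b))%:R =
  \sum_v PX a * PVX a v * chan_at l v b.
Proof.
rewrite exchange_big /= -(sum_fibers (fun vs => tnth vs l)); apply: eq_bigr => v _.
rewrite mulr_sumr; apply: eq_bigr => vs /eqP vl.
have marg_X : \sum_(xs | tnth xs l == a)
      \prod_(k < L) (PX (tnth xs k) * PVX (tnth xs k) (tnth vs k)) =
    PX a * PVX a v * \prod_(k < L | k != l) PV (tnth vs k).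
  by rewrite (sum_tuple_prod_at (fun k x => PX x * PVX x (tnth vs k))) vl.
rewrite mulrA -marg_X big_distrlr [RHS]big_mkcond; apply: eq_bigr => xs _ /=.
under eq_bigr do rewrite xpair_eqE.
case: (tnth xs l == a) => /=; last by rewrite big1 // => ys _; rewrite mulr0.
by rewrite [RHS]big_mkcond; apply: eq_bigr => ys _; case: (_ == b); rewrite ?mulr1 ?mulr0.
Qed.

Lemma joint_XY_avg_chan :
  joint_XY PX PVX avg_chan = [ffun ab => \sum_(z : L.-tuple X * (L.-tuple V * L.-tuple Y))
    block_law PX PVX enc z.1 z.2.1 z.2.2 * empirical R z.1 z.2.2 ab].
Proof.
apply/ffunP => -[a b]; rewrite !ffunE /=.
transitivity (L%:R^-1 * \sum_(l < L) \sum_v PX a * PVX a v * chan_at l v b).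
  rewrite exchange_big mulr_sumr; apply: eq_bigr => v _.
  by rewrite !ffunE mulrCA mulr_sumr.
under [in LHS]eq_bigr => l _ do rewrite -(block_law_at l a b) sum_triple.
rewrite exchange_big mulr_sumr; apply: eq_bigr => z _.
by rewrite empiricalE mulrCA [in RHS]mulr_sumr.
Qed.

Lemma avg_chan_distortion_le (d : {ffun X * Y -> R} -> R) :
  nonneg_convex_dist d ->
  d (joint_XY PX PVX avg_chan) <= expected_distortion PX PVX enc d.
Proof.
move=> d_convex; rewrite joint_XY_avg_chan /expected_distortion sum_triple.
apply: convex_dist_mixture => //.
- by move=> z; apply: block_law_ge0.
- by rewrite -sum_triple block_law_sum1.
- by move=> z; apply: empirical_is_dist.
Qed.
End BlockCode.

Local Open Scope classical_set_scope.

Theorem lemma3p1 (R : realType) (X V Y : finType)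
  (PX : {ffun X -> R}) (PVX : {ffun X -> {ffun V -> R}})
  (d : {ffun X * Y -> R} -> R)
  (L : nat) (rate : R) (C : {set L.-tuple Y})
  (enc : {ffun L.-tuple V -> {ffun L.-tuple Y -> R}}) (Delta : R) :
  is_dist PX -> is_channel PVX -> nonneg_convex_dist d ->
  (0 < L)%N ->
  (#|C|%:R <= 2 `^ (L%:R * rate)) ->
  (forall v, is_dist (enc v)) ->
  (forall v y, enc v y != 0 -> y \in C) ->
  expected_distortion PX PVX enc d = Delta ->
  inf [set r : R | exists W : {ffun V -> {ffun Y -> R}},
          [/\ is_channel W, d (joint_XY PX PVX W) <= Delta
            & r = mutinfo (joint_VY PX PVX W)]] <= rate.
Proof.
move=> PX_dist PVX_channel d_convex L_gt0 C_le enc_channel enc_supp <-.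
have C_gt0 := code_card_gt0 (PV_block_sum1 L PX_dist PVX_channel) enc_channel enc_supp.
have L_ln2_gt0 : 0 < L%:R * ln 2 :> R by rewrite mulr_gt0 ?ltr0n // ln_gt0 // ltr1n.
have ln_C_le : ln #|C|%:R <= L%:R * ln 2 * rate.
  by rewrite mulrAC -ln_powR ler_ln ?posrE ?powR_gt0 ?ltr0n.
apply: (inf_le_of_mem (x := mutinfo (avg_VY PX PVX enc))).
- exists (avg_chan PX PVX enc); split=> //.
    exact: avg_chan_is_channel.
  exact: avg_chan_distortion_le.
- rewrite -(ler_pM2l L_ln2_gt0); apply: le_trans ln_C_le.
  exact: mutinfo_avg_VY_le.
- rewrite -(pmulr_rge0 _ L_ln2_gt0); apply: le_trans ln_C_le.
  by rewrite ln_ge0 // ler1n.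
Qed.
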